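(* Let $A\in\mathbb{C}^{m\times n}$. Then there exists $X\in A\{1,3^{\mathfrak{m}}\}$ if and only if there exists $Y\in A\{1,2,3^{\mathfrak{m}}\}$.
   Context: For a positive integer $k$, the Minkowski metric matrix of order $k$ is $G_k=\begin{pmatrix}1&0\\0&-I_{k-1}\end{pmatrix}$ (with $G_1=(1)$). For $A\in\mathbb{C}^{m\times n}$, the Minkowski adjoint is $A^{\sim}=G_nA^*G_m$, where $A^*$ is the conjugate transpose. For $A\in\mathbb{C}^{m\times n}$ and $X\in\mathbb{C}^{n\times m}$ consider the equations $(1)\ AXA=A$, $(2)\ XAX=X$, $(3^{\mathfrak{m}})\ (AX)^{\sim}=AX$, $(4^{\mathfrak{m}})\ (XA)^{\sim}=XA$. For a selection $i,j,\dots,k$ of these equations, $A\{i,j,\dots,k\}$ denotes the set of all $X\in\mathbb{C}^{n\times m}$ satisfying equations $(i),(j),\dots,(k)$. *)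

From HB Require Import structures.
From mathcomp Require Import all_boot all_order all_algebra.
From mathcomp Require Import complex.
From mathcomp Require Import reals.
Set Implicit Arguments. Unset Strict Implicit. Unset Printing Implicit Defensive.
Import Order.TTheory GRing.Theory Num.Theory.
Local Open Scope ring_scope.

Definition mink_G (C : pzRingType) (k : nat) : 'M[C]_k :=
  \matrix_(i < k, j < k) (if i == j then (if val i == 0%N then 1 else -1) else 0).

Definition conjT (C : numClosedFieldType) m n (A : 'M[C]_(m, n)) : 'M[C]_(n, m) :=
  map_mx Num.conj (A^T).

Definition mink_adj (C : numClosedFieldType) m n (A : 'M[C]_(m, n)) : 'M[C]_(n, m) :=
  mink_G C n *m conjT A *m mink_G C m.

Definition eq1 (C : numClosedFieldType) m n (A : 'M[C]_(m, n)) (X : 'M[C]_(n, m)) :=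
  A *m X *m A = A.
Definition eq2 (C : numClosedFieldType) m n (A : 'M[C]_(m, n)) (X : 'M[C]_(n, m)) :=
  X *m A *m X = X.
Definition eq3m (C : numClosedFieldType) m n (A : 'M[C]_(m, n)) (X : 'M[C]_(n, m)) :=
  mink_adj (A *m X) = A *m X.
Definition eq4m (C : numClosedFieldType) m n (A : 'M[C]_(m, n)) (X : 'M[C]_(n, m)) :=
  mink_adj (X *m A) = X *m A.

From HB Require Import structures.
From mathcomp Require Import all_boot all_order all_algebra.
From mathcomp Require Import complex.
From mathcomp Require Import reals.
Import GRing.Theory Num.Theory.
Local Open Scope ring_scope.

(* If X is a {1}-inverse of A, then Y = XAX is a {1,2}-inverse with AY = AX;
   since equation (3^m) only involves the product AX, it passes from X to Y.
   No property of the Minkowski adjoint is needed. *)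

Section SandwichInverse.

Variables (R : pzSemiRingType) (m n : nat).
Variables (A : 'M[R]_(m, n)) (X : 'M[R]_(n, m)).
Hypothesis AXA : A *m X *m A = A.

Lemma mulmx_sandwich : A *m (X *m A *m X) = A *m X.
Proof. by rewrite !mulmxA AXA. Qed.

Lemma sandwich_inner_inverse : A *m (X *m A *m X) *m A = A.
Proof. by rewrite mulmx_sandwich AXA. Qed.

Lemma sandwich_outer_inverse :
  X *m A *m X *m A *m (X *m A *m X) = X *m A *m X.
Proof.
have XAXA : X *m A *m X *m A = X *m A by rewrite -(mulmxA X A X) -mulmxA AXA.
by rewrite !mulmxA XAXA XAXA.
Qed.

End SandwichInverse.

Theorem theorem4p2 (R : realType) (m n : nat) (hm : (0 < m)%N) (hn : (0 < n)%N)
    (A : 'M[R[i]]_(m, n)) :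
  (exists X : 'M[R[i]]_(n, m), eq1 A X /\ eq3m A X) <->
  (exists Y : 'M[R[i]]_(n, m), [/\ eq1 A Y, eq2 A Y & eq3m A Y]).
Proof.
split; last by case=> Y [AYA _ AY_adj]; exists Y.
case=> X [AXA AX_adj]; exists (X *m A *m X); split.
- exact: sandwich_inner_inverse.
- exact: sandwich_outer_inverse.
- by rewrite /eq3m mulmx_sandwich.
Qed.
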